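(* There is a constant $c$ such that the following holds. Let $x\in\{0,1\}^n$ and let $A$ be a finite set with $x\in A$ and $CT(A\mid x)\le\epsilon$. Then there exist a finite set $A_1$ and a finite partition $\mathcal{A}$ with $C(\mathcal{A})\le\epsilon+c\log n$ such that: 1) $x\in A_1$ and $CT(A_1\mid x)\le\epsilon+c\log n$; 2) $CT(A\mid A_1)<\epsilon+c\log n$ and $CT(A_1\mid A)<\epsilon+c\log n$; 3) $|A_1|\le|A|$; 4) $A_1\in\mathcal{A}$.
   Context: Strings are binary; $C$ is plain Kolmogorov complexity w.r.t. a fixed universal decompressor $D$; finite sets and finite families of finite sets have complexity defined via fixed computable encodings. $CT(y\mid x)$ is the minimal length of a program $p$ such that $D(p,z)$ is defined for all $z$ and $D(p,x)=y$ (with sets replaced by their codes). A family $\mathcal{A}$ of sets is a partition if for all $A',A''\in\mathcal{A}$, $A'\cap A''\ne\varnothing$ implies $A'=A''$. *)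

From HB Require Import structures.
From mathcomp Require Import all_boot.
From mathcomp Require Import finmap.

Set Implicit Arguments.
Unset Strict Implicit.
Unset Printing Implicit Defensive.


(* A model of computation: codes of (mu-)recursive functions on nat,   *)
(* with a fuel-indexed evaluator.  Arguments are passed as a list of   *)
(* naturals; missing arguments read as 0.                              *)

Inductive rcode : Type :=
| RZero : rcode
| RSucc : rcode                       (* x0 + 1 *)
| RProj : nat -> rcode                (* x_i *)
| RComp : rcode -> seq rcode -> rcode (* f (g1 v, ..., gm v) *)
| RPrec : rcode -> rcode -> rcode     (* primitive recursion on x0 *)
| RMu   : rcode -> rcode.             (* least m with f (m :: v) = 0 *)

Fixpoint opt_all (s : seq (option nat)) : option (seq nat) :=
  match s with
  | [::] => Some [::]
  | o :: s' => match o, opt_all s' with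
               | Some a, Some l => Some (a :: l)
               | _, _ => None
               end
  end.

Fixpoint reval (k : nat) (c : rcode) (v : seq nat) : option nat :=
  match k with
  | 0 => None
  | k'.+1 =>
    match c with
    | RZero => Some 0
    | RSucc => Some (nth 0 v 0).+1
    | RProj i => Some (nth 0 v i)
    | RComp f gs =>
        match opt_all (map (fun g => reval k' g v) gs) with
        | Some w => reval k' f w
        | None => None
        end
    | RPrec f g =>
        let n := nth 0 v 0 in
        let r := behead v in
        (fix loop (i : nat) : option nat :=
           match i with
           | 0 => reval k' f r
           | i'.+1 => match loop i' with
                      | Some h => reval k' g (i' :: h :: r)
                      | None => None
                      end
           end) n
    | RMu f =>
        (fix search (m fuel : nat) : option nat :=
           match fuel with
           | 0 => None
           | fuel'.+1 => match reval k' f (m :: v) with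
                         | Some 0 => Some m
                         | Some _ => search m.+1 fuel'
                         | None => None
                         end
           end) 0 k'
    end
  end.

(* Bijection between binary strings and naturals:
   s |-> (number with binary expansion 1s) - 1. *)
Definition nat_of_str (s : seq bool) : nat :=
  (foldl (fun acc (b : bool) => (acc.*2 + b)%N) 1 s).-1.

Definition computes (c : rcode)
    (F : seq bool -> seq bool -> option (seq bool)) : Prop :=
  forall p x y, F p x = Some y <->
    exists k, reval k c [:: nat_of_str p; nat_of_str x] = Some (nat_of_str y).

Definition computable (F : seq bool -> seq bool -> option (seq bool)) :=
  exists c, computes c F.

Definition universal (D : seq bool -> seq bool -> option (seq bool)) : Prop :=
  computable D /\
  forall F, computable F ->
    exists k, forall p, exists p',
      size p' <= size p + k /\ forall z, D p' z = F p z.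

(* Kolmogorov complexities (expressed through bounds: "C <= m" iff     *)
(* some program of length <= m exists, which is exactly the meaning    *)
(* of the minimum).                                                    *)

(* Plain complexity C(y) = C(y | empty string). *)
Definition C_le (D : seq bool -> seq bool -> option (seq bool)) (y : seq bool) (m : nat) : Prop :=
  exists p, size p <= m /\ D p [::] = Some y.

Definition total_prog (D : seq bool -> seq bool -> option (seq bool)) (p : seq bool) :=
  forall z, D p z <> None.

Definition CT_le (D : seq bool -> seq bool -> option (seq bool)) (y x : seq bool) (m : nat) : Prop :=
  exists p, size p <= m /\ total_prog D p /\ D p x = Some y.

Definition CT_lt (D : seq bool -> seq bool -> option (seq bool)) (y x : seq bool) (m : nat) : Prop :=
  exists p, size p < m /\ total_prog D p /\ D p x = Some y.

Local Open Scope fset_scope.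

(* self-delimiting code of a string: bits doubled, then 01 *)
Definition enc_str (s : seq bool) : seq bool :=
  flatten [seq [:: b; b] | b <- s] ++ [:: false; true].

Definition enc_list (l : seq (seq bool)) : seq bool :=
  flatten (map enc_str l).

Fixpoint lexle (s t : seq bool) : bool :=
  match s, t with
  | [::], _ => true
  | _ :: _, [::] => false
  | a :: s', b :: t' => (a < b) || ((a == b) && lexle s' t')
  end.

Definition shortlex (s t : seq bool) : bool :=
  (size s < size t) || ((size s == size t) && lexle s t).

Definition code_set (A : {fset seq bool}) : seq bool :=
  enc_list (sort shortlex A).

Definition code_fam (F : {fset {fset seq bool}}) : seq bool :=
  enc_list (sort shortlex [seq code_set A | A <- F]).

Definition is_partition (F : {fset {fset seq bool}}) : Prop :=
  forall A' A'', A' \in F -> A'' \in F -> A' `&` A'' != fset0 -> A' = A''.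

(* log n, normalized to be >= 1 (the "c log n" slack term) *)
Definition clog (n : nat) : nat := (trunc_log 2 n).+1.

From mathcomp Require Import all_boot.
From mathcomp Require Import finmap.
From mathcomp Require Import zify.
From Stdlib Require Import ClassicalEpsilon.
Set Implicit Arguments. Unset Strict Implicit. Unset Printing Implicit Defensive.

(** Let [p] be a total program with [D(p, x) = code A], and let [A1] be the
    fibre of [D(p, .)] over [code A] inside [A], i.e. the [y \in A] with
    [D(p, y) = code A].  Then [x \in A1 \subset A].  Using [D(p, .)] as an
    oracle, [A1] is computed from [code A] and, since [D(p, x) = code A], also
    from [x]; conversely [code A] is obtained from [A1] by running [p] on any of
    its elements.  The fibres of [D(p, .)] over the values [D(p, z)], [|z| = n],
    are pairwise disjoint and [A1] is one of them; this family is computed from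
    [n] and the oracle.  Each of these computations needs, besides [p], only an
    O(1) description (and [n], for the family), so universality turns it into a
    [D]-program of length [|p| + O(log n)]. *)

Fixpoint mu_search (e : seq nat -> option nat) (v : seq nat) (m fuel : nat) : option nat :=
  match fuel with
  | 0 => None
  | fuel'.+1 => match e (m :: v) with
                | Some 0 => Some m
                | Some _ => mu_search e v m.+1 fuel'
                | None => None
                end
  end.

Fixpoint prec_loop (ef eg : seq nat -> option nat) (r : seq nat) (i : nat) : option nat :=
  match i with
  | 0 => ef r
  | i'.+1 => match prec_loop ef eg r i' with
             | Some h => eg (i' :: h :: r)
             | None => None
             end
  end.

Lemma reval_mu k f v : reval k.+1 (RMu f) v = mu_search (reval k f) v 0 k.
Proof.
have search_mu_search : forall fu m, (fix search (m fuel : nat) : option nat :=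
    match fuel with
    | 0 => None
    | fuel'.+1 => match reval k f (m :: v) with
                  | Some 0 => Some m
                  | Some _ => search m.+1 fuel'
                  | None => None
                  end
    end) m fu = mu_search (reval k f) v m fu.
  by elim=> //= fu IH m; rewrite IH.
exact: search_mu_search.
Qed.

Lemma reval_prec k f g v :
  reval k.+1 (RPrec f g) v = prec_loop (reval k f) (reval k g) (behead v) (nth 0 v 0).
Proof. by rewrite /=; elim: (nth 0 v 0) => //= i ->. Qed.

Lemma reval_comp k f gs v : reval k.+1 (RComp f gs) v =
  if opt_all (map (fun g => reval k g v) gs) is Some w then reval k f w else None.
Proof. by []. Qed.

Lemma opt_all_mono (e1 e2 : rcode -> option nat) gs w :
  (forall g y, e1 g = Some y -> e2 g = Some y) ->
  opt_all (map e1 gs) = Some w -> opt_all (map e2 gs) = Some w.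
Proof.
move=> e12; elim: gs w => //= g gs IH w.
case E1: (e1 g) => [a|] //; case E2: (opt_all (map e1 gs)) => [l|] // [<-].
by rewrite (e12 _ _ E1) (IH _ E2).
Qed.

Lemma reval_monoS k c v y : reval k c v = Some y -> reval k.+1 c v = Some y.
Proof.
elim: k c v y => [//|k IH] [||i|f gs|f g|f] v y //.
- rewrite !reval_comp; case E: (opt_all _) => [w|] //.
  by rewrite (opt_all_mono (e2 := fun g => reval k.+1 g v) _ E) => [/IH|g' y'] //; apply: IH.
- rewrite !reval_prec.
  elim: (nth 0 v 0) y => [|i IHi] y' /=; first exact: IH.
  by case E: (prec_loop _ _ _ i) => [h|] //; rewrite (IHi _ E); apply: IH.
- rewrite !reval_mu.
  suff mono_fuel : forall fu m fu', fu <= fu' -> mu_search (reval k f) v m fu = Some y ->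
      mu_search (reval k.+1 f) v m fu' = Some y by apply: mono_fuel.
  elim=> [//|fu IHf] m [//|fu'] Hle; cbn [mu_search].
  case E: (reval k f (m :: v)) => [[|a]|] //; rewrite (IH _ _ _ E) //.
  exact: IHf.
Qed.

Lemma reval_mono k k' c v y : k <= k' -> reval k c v = Some y -> reval k' c v = Some y.
Proof.
move=> /subnK <-; elim: (k' - k) => [//|j IH] H.
by rewrite addSn; apply/reval_monoS/IH.
Qed.

Lemma reval_det k k' c v y y' : reval k c v = Some y -> reval k' c v = Some y' -> y = y'.
Proof.
move=> /(reval_mono (leq_maxl k k')) + /(reval_mono (leq_maxr k k')).
by move=> -> [].
Qed.

Definition converges c v y := exists k, reval k c v = Some y.

Definition converges_all gs v w := exists K, forall k, K <= k ->
  opt_all (map (fun g => reval k g v) gs) = Some w.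

Lemma converges_all_nil v : converges_all [::] v [::].
Proof. by exists 0. Qed.

Lemma converges_all_cons g gs v a w :
  converges g v a -> converges_all gs v w -> converges_all (g :: gs) v (a :: w).
Proof.
move=> [k1 H1] [K H]; exists (maxn k1 K) => k; rewrite geq_max => /andP [k1k Kk] /=.
by rewrite (reval_mono k1k H1) H.
Qed.

Lemma converges_comp f gs v w y :
  converges_all gs v w -> converges f w y -> converges (RComp f gs) v y.
Proof.
move=> [K H] [k1 H1]; exists (maxn K k1).+1.
by rewrite reval_comp H ?leq_maxl // (reval_mono _ H1) ?leq_maxr.
Qed.

Lemma converges_proj i v : converges (RProj i) v (nth 0 v i).
Proof. by exists 1. Qed.

Lemma converges_zero v : converges RZero v 0.
Proof. by exists 1. Qed.

Lemma converges_succ v : converges RSucc v (nth 0 v 0).+1.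
Proof. by exists 1. Qed.

Lemma converges_call f gs np env w y :
  converges_all gs (np :: env) w -> converges f (np :: w) y ->
  converges (RComp f (RProj 0 :: gs)) (np :: env) y.
Proof. by move=> gsw; apply/converges_comp/converges_all_cons/gsw/converges_proj. Qed.

Lemma converges_all_env (pre env : seq nat) :
  converges_all [seq RProj i | i <- iota (size pre) (size env)] (pre ++ env) env.
Proof.
elim: env pre => [|a env IH] pre /=; first exact: converges_all_nil.
apply: converges_all_cons.
  by have := converges_proj (size pre) (pre ++ a :: env); rewrite nth_cat ltnn subnn.
by have := IH (rcons pre a); rewrite size_rcons -cats1 -catA.
Qed.

Lemma converges_prec fi fs r base (F : nat -> nat -> nat) n :
  converges fi r base -> (forall i h, converges fs [:: i, h & r] (F i h)) ->
  converges (RPrec fi fs) (n :: r) (nat_rec (fun _ => nat) base F n).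
Proof.
move=> [k0 H0] Hs.
have loop_converges i : exists K, forall k, K <= k ->
    prec_loop (reval k fi) (reval k fs) r i = Some (nat_rec (fun _ => nat) base F i).
  elim: i => [|i [K HK]] /=; first by exists k0 => k /reval_mono; apply.
  have [K2 HK2] := Hs i (nat_rec (fun _ => nat) base F i).
  exists (maxn K K2) => k; rewrite geq_max => /andP [Kk K2k].
  by rewrite HK // (reval_mono K2k HK2).
have [K HK] := loop_converges n.
by exists K.+1; rewrite reval_prec; apply: HK.
Qed.

(** * A first-order language with an oracle *)

(* Variables are de Bruijn indices into the environment; [EOr e] calls the
   oracle on [e]; [ERec n b s] iterates [s] [n] times from [b], [s] seeing the
   counter and the previous value pushed onto the environment; [EAk f a1 .. ak]
   runs [f] in the fresh environment [a1; ..; ak], so that closed "macros" can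
   be reused inside any context. *)
Inductive ex : Type :=
| EZ | ES of ex | EV of nat | EOr of ex | ELet of ex & ex | ERec of ex & ex & ex
| EA1 of ex & ex | EA2 of ex & ex & ex | EA3 of ex & ex & ex & ex.

Fixpoint den (d : nat -> nat) (e : ex) (env : seq nat) {struct e} : nat :=
  match e with
  | EZ => 0
  | ES e => (den d e env).+1
  | EV i => nth 0 env i
  | EOr e => d (den d e env)
  | ELet e1 e2 => den d e2 (den d e1 env :: env)
  | ERec en ei es =>
      nat_rec (fun _ => nat) (den d ei env) (fun i h => den d es [:: i, h & env]) (den d en env)
  | EA1 f a => den d f [:: den d a env]
  | EA2 f a b => den d f [:: den d a env; den d b env]
  | EA3 f a b c => den d f [:: den d a env; den d b env; den d c env]
  end.

Section Compile.
Variable cD : rcode.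

Definition oracle_ok np d := forall z, converges cD [:: np; z] (d z).

(* The compiled code keeps the oracle's program in argument 0 and the
   environment of size [m] in arguments 1 .. m. *)
Fixpoint compile (m : nat) (e : ex) {struct e} : rcode :=
  match e with
  | EZ => RZero
  | ES e => RComp RSucc [:: compile m e]
  | EV i => RProj i.+1
  | EOr e => RComp cD [:: RProj 0; compile m e]
  | ELet e1 e2 => RComp (compile m.+1 e2)
                    (RProj 0 :: compile m e1 :: [seq RProj i | i <- iota 1 m])
  | ERec en ei es =>
      RComp (RPrec (compile m ei)
                   (RComp (compile m.+2 es)
                      (RProj 2 :: RProj 0 :: RProj 1 :: [seq RProj i | i <- iota 3 m])))
            (compile m en :: RProj 0 :: [seq RProj i | i <- iota 1 m])
  | EA1 f a => RComp (compile 1 f) [:: RProj 0; compile m a]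
  | EA2 f a b => RComp (compile 2 f) [:: RProj 0; compile m a; compile m b]
  | EA3 f a b c => RComp (compile 3 f) [:: RProj 0; compile m a; compile m b; compile m c]
  end.

Lemma compile_converges np d e m env : oracle_ok np d -> size env = m ->
  converges (compile m e) (np :: env) (den d e env).
Proof.
move=> dok; elim: e m env => [|e IH|i|e IH|e1 IH1 e2 IH2|en IHn ei IHi es IHs|f IHf a IHa
  |f IHf a IHa b IHb|f IHf a IHa b IHb c IHc] m env Hs /=.
- exact: converges_zero.
- apply: (converges_comp (w := [:: den d e env])) (converges_succ _).
  exact: converges_all_cons (IH _ _ Hs) (converges_all_nil _).
- exact: converges_proj.
- apply: (converges_call (w := [:: den d e env])) (dok _).
  exact: converges_all_cons (IH _ _ Hs) (converges_all_nil _).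
- apply: (converges_call (w := den d e1 env :: env)); last by apply: IH2; rewrite /= Hs.
  by apply: converges_all_cons (IH1 _ _ Hs) _; rewrite -Hs; apply: (converges_all_env [:: np]).
- apply: (converges_comp (w := [:: den d en env, np & env])).
    apply: converges_all_cons (IHn _ _ Hs) (converges_all_cons (converges_proj _ _) _).
    by rewrite -Hs; apply: (converges_all_env [:: np]).
  apply: converges_prec (IHi _ _ Hs) _ => i h.
  apply: (converges_comp (w := [:: np, i, h & env])); last by apply: IHs; rewrite /= Hs.
  do 3 apply: converges_all_cons (converges_proj _ _) _.
  by rewrite -Hs; apply: (converges_all_env [:: i; h; np]).
- apply: (converges_call (w := [:: den d a env])) (IHf _ _ erefl).
  exact: converges_all_cons (IHa _ _ Hs) (converges_all_nil _).
- apply: (converges_call (w := [:: den d a env; den d b env])) (IHf _ _ erefl).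
  apply: converges_all_cons (IHa _ _ Hs) _.
  exact: converges_all_cons (IHb _ _ Hs) (converges_all_nil _).
- apply: (converges_call (w := [:: den d a env; den d b env; den d c env])) (IHf _ _ erefl).
  apply: converges_all_cons (IHa _ _ Hs) (converges_all_cons (IHb _ _ Hs) _).
  exact: converges_all_cons (IHc _ _ Hs) (converges_all_nil _).
Qed.

End Compile.

Section Macros.
Variable d : nat -> nat.
Local Notation den := (den d).

Lemma denZ env : den EZ env = 0. Proof. by []. Qed.
Lemma denS e env : den (ES e) env = (den e env).+1. Proof. by []. Qed.
Lemma denV i env : den (EV i) env = nth 0 env i. Proof. by []. Qed.
Lemma denOr e env : den (EOr e) env = d (den e env). Proof. by []. Qed.
Lemma denLet e1 e2 env : den (ELet e1 e2) env = den e2 (den e1 env :: env). Proof. by []. Qed.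
Lemma denA1 f a env : den (EA1 f a) env = den f [:: den a env]. Proof. by []. Qed.
Lemma denA2 f a b env : den (EA2 f a b) env = den f [:: den a env; den b env]. Proof. by []. Qed.
Lemma denA3 f a b c env : den (EA3 f a b c) env = den f [:: den a env; den b env; den c env].
Proof. by []. Qed.

Lemma denRec_iter en ei es env (F : nat -> nat) :
  (forall i h, den es [:: i, h & env] = F h) ->
  den (ERec en ei es) env = iter (den en env) F (den ei env).
Proof. by move=> H /=; elim: (den en env) => //= n ->; rewrite H. Qed.

Lemma denRec en ei es env (F : nat -> nat -> nat) :
  (forall i h, den es [:: i, h & env] = F i h) ->
  den (ERec en ei es) env = nat_rec (fun _ => nat) (den ei env) F (den en env).
Proof. by move=> H /=; elim: (den en env) => //= n ->; rewrite H. Qed.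
End Macros.

Arguments den : simpl never.

Ltac dsimp := repeat first [rewrite denZ | rewrite denS | rewrite denV | rewrite denOr
  | rewrite denLet | rewrite denA1 | rewrite denA2 | rewrite denA3]; rewrite /=.

(* Macros are locked so that [dsimp] does not unfold them. *)
Definition eadd := locked (ERec (EV 0) (EV 1) (ES (EV 1))).
Lemma den_add d a b : den d eadd [:: a; b] = a + b.
Proof. by rewrite /eadd -lock (@denRec_iter d _ _ _ _ succn) //; dsimp; elim: a => //= a ->. Qed.

Definition emul := locked (ERec (EV 0) EZ (EA2 eadd (EV 1) (EV 3))).
Lemma den_mul d a b : den d emul [:: a; b] = a * b.
Proof.
rewrite /emul -lock (@denRec_iter d _ _ _ _ (fun h => h + b)); last first.
  by move=> i h; dsimp; rewrite den_add.
by dsimp; elim: a => //= a ->; rewrite mulSn addnC.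
Qed.

Definition epred := locked (ERec (EV 0) EZ (EV 0)).
Lemma den_pred d a : den d epred [:: a] = a.-1.
Proof. by rewrite /epred -lock (@denRec d _ _ _ _ (fun i _ => i)) //; dsimp; case: a. Qed.

Definition esub := locked (ERec (EV 1) (EV 0) (EA1 epred (EV 1))).
Lemma den_sub d a b : den d esub [:: a; b] = a - b.
Proof.
rewrite /esub -lock (@denRec_iter d _ _ _ _ predn); last by move=> i h; dsimp; rewrite den_pred.
by dsimp; elim: b => [|b /= ->]; rewrite ?subn0 ?subnS.
Qed.

Definition eisz := locked (ERec (EV 0) (ES EZ) EZ).
Lemma den_isz d a : den d eisz [:: a] = (a == 0).
Proof. by rewrite /eisz -lock (@denRec d _ _ _ _ (fun _ _ => 0)) //; dsimp; case: a. Qed.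

Definition eleb := locked (EA1 eisz (EA2 esub (EV 0) (EV 1))).
Lemma den_leb d a b : den d eleb [:: a; b] = (a <= b).
Proof. by rewrite /eleb -lock; dsimp; rewrite den_sub den_isz subn_eq0. Qed.

Definition eeqb := locked (EA2 emul (EA2 eleb (EV 0) (EV 1)) (EA2 eleb (EV 1) (EV 0))).
Lemma den_eqb d a b : den d eeqb [:: a; b] = (a == b).
Proof.
rewrite /eeqb -lock; dsimp; rewrite !den_leb den_mul eqn_leq.
by case: (a <= b); case: (b <= a).
Qed.

Definition eite := locked (ERec (EV 0) (EV 2) (EV 3)).
Lemma den_ite d b x y : den d eite [:: b; x; y] = if b is 0 then y else x.
Proof. by rewrite /eite -lock (@denRec d _ _ _ _ (fun _ _ => x)) //; dsimp; case: b. Qed.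

Definition emod2 := locked (ERec (EV 0) EZ (EA1 eisz (EV 1))).
Lemma den_mod2 d a : den d emod2 [:: a] = odd a.
Proof.
rewrite /emod2 -lock (@denRec_iter d _ _ _ _ (fun h => h == 0)); last first.
  by move=> i h; dsimp; rewrite den_isz.
by dsimp; elim: a => //= a ->; case: (odd a).
Qed.

Definition ediv2 := locked (ERec (EV 0) EZ (EA2 eadd (EV 1) (EA1 emod2 (EV 0)))).
Lemma den_div2 d a : den d ediv2 [:: a] = a./2.
Proof.
rewrite /ediv2 -lock (@denRec d _ _ _ _ (fun i h => h + odd i)); last first.
  by move=> i h; dsimp; rewrite den_mod2 den_add.
dsimp; elim: a => //= a ->.
by rewrite uphalf_half addnC.
Qed.

Fixpoint ecst k := if k is k'.+1 then ES (ecst k') else EZ.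
Lemma den_cst d k env : den d (ecst k) env = k.
Proof. by elim: k => //= k IH; dsimp; rewrite IH. Qed.
Lemma den_ite0 d x y : den d eite [:: 0; x; y] = y.
Proof. by rewrite den_ite. Qed.
Lemma den_iteS d b x y : den d eite [:: b.+1; x; y] = x.
Proof. by rewrite den_ite. Qed.

(** * Pairs and lists *)

(* Cantor pairing; [csum] recovers [a + b] from [cpair a b] by counting the
   triangular numbers below it. *)
Fixpoint tri s := if s is s'.+1 then tri s' + s else 0.
Definition cpair a b := tri (a + b) + b.
Fixpoint cnt z n := if n is n'.+1 then cnt z n' + (tri n <= z) else 0.
Definition csum z := cnt z z.
Definition csnd z := z - tri (csum z).
Definition cfst z := csum z - csnd z.

Lemma tri_mono m n : m <= n -> tri m <= tri n.
Proof.
move=> /subnK <-; elim: (n - m) => [//|k IH].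
by rewrite addSn /=; apply: leq_trans IH (leq_addr _ _).
Qed.
Lemma tri_ge s : s <= tri s.
Proof. elim: s => //= s IH; lia. Qed.

Lemma csum_pair a b : csum (cpair a b) = a + b.
Proof.
rewrite /csum; set z := cpair a b; set s := a + b.
have Ht : forall t, (tri t <= z) = (t <= s).
  move=> t; rewrite /z /cpair -/s; case: (leqP t s) => Hts.
    by rewrite (leq_trans (tri_mono Hts)) // leq_addr.
  apply/negbTE; rewrite -ltnNge; apply: (@leq_trans (tri s.+1)); last exact: tri_mono.
  rewrite /= /s; lia.
have Hc : forall n, cnt z n = minn n s.
  elim=> [|n IH]; first by rewrite min0n.
  have -> : cnt z n.+1 = cnt z n + (tri n.+1 <= z) by [].
  rewrite IH Ht; case: (leqP n.+1 s) => H /=; lia.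
rewrite Hc; apply/minn_idPr; rewrite /z /cpair -/s.
have := tri_ge s; lia.
Qed.

Lemma cpair_snd a b : csnd (cpair a b) = b.
Proof. rewrite /csnd csum_pair /cpair; lia. Qed.
Lemma cpair_fst a b : cfst (cpair a b) = a.
Proof. rewrite /cfst cpair_snd csum_pair; lia. Qed.
Lemma cpair_ge b a : b <= cpair a b.
Proof. rewrite /cpair; lia. Qed.

Definition etri := locked (ERec (EV 0) EZ (EA2 eadd (EV 1) (ES (EV 0)))).
Lemma den_tri d s : den d etri [:: s] = tri s.
Proof.
rewrite /etri -lock (@denRec d _ _ _ _ (fun i h => h + i.+1)); last first.
  by move=> i h; dsimp; rewrite den_add.
by dsimp; elim: s => //= s ->.
Qed.

Definition epair := locked (EA2 eadd (EA1 etri (EA2 eadd (EV 0) (EV 1))) (EV 1)).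
Lemma den_pair d a b : den d epair [:: a; b] = cpair a b.
Proof. by rewrite /epair -lock; dsimp; rewrite !den_add den_tri. Qed.

Definition ecsum :=
  locked (ERec (EV 0) EZ (EA2 eadd (EV 1) (EA2 eleb (EA1 etri (ES (EV 0))) (EV 2)))).
Lemma den_csum d z : den d ecsum [:: z] = csum z.
Proof.
rewrite /ecsum -lock (@denRec d _ _ _ _ (fun i h => h + (tri i.+1 <= z))); last first.
  by move=> i h; dsimp; rewrite den_tri den_leb den_add.
dsimp; rewrite /csum.
have rec_cnt n : nat_rec (fun _ => nat) 0 (fun i h => h + (tri i.+1 <= z)) n = cnt z n.
  by elim: n => //= n ->.
exact: rec_cnt.
Qed.

Definition esnd := locked (EA2 esub (EV 0) (EA1 etri (EA1 ecsum (EV 0)))).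
Lemma den_snd d z : den d esnd [:: z] = csnd z.
Proof. by rewrite /esnd -lock; dsimp; rewrite den_csum den_tri den_sub. Qed.
Definition efst := locked (EA2 esub (EA1 ecsum (EV 0)) (EA1 esnd (EV 0))).
Lemma den_fst d z : den d efst [:: z] = cfst z.
Proof. by rewrite /efst -lock; dsimp; rewrite den_csum den_snd den_sub. Qed.

Fixpoint lcode (s : seq nat) : nat := if s is a :: s' then (cpair a (lcode s')).+1 else 0.
Definition lhead l := cfst l.-1.
Definition ltail l := csnd l.-1.
Lemma size_lcode s : size s <= lcode s.
Proof. by elim: s => //= a s IH; rewrite ltnS (leq_trans IH) // cpair_ge. Qed.

Definition econs := locked (ES (EA2 epair (EV 0) (EV 1))).
Lemma den_consR d a l : den d econs [:: a; l] = (cpair a l).+1.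
Proof. by rewrite /econs -lock; dsimp; rewrite den_pair. Qed.
Lemma den_cons d a s : den d econs [:: a; lcode s] = lcode (a :: s).
Proof. exact: den_consR. Qed.
Definition ehd := locked (EA1 efst (EA1 epred (EV 0))).
Lemma den_hd d l : den d ehd [:: l] = lhead l.
Proof. by rewrite /ehd -lock; dsimp; rewrite den_pred den_fst. Qed.
Lemma lhead_cons a s : lhead (lcode (a :: s)) = a.
Proof. by rewrite /lhead /= cpair_fst. Qed.

Definition etl := locked (EA1 esnd (EA1 epred (EV 0))).
Lemma den_tl d l : den d etl [:: l] = ltail l.
Proof. by rewrite /etl -lock; dsimp; rewrite den_pred den_snd. Qed.

(* The step of [efoldl step] runs in the environment [x; acc; prm]. *)
Definition efoldl (step : ex) := locked (EA1 esnd (ERec (EV 0) (EA2 epair (EV 0) (EV 1))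
  (EA3 eite (EA1 efst (EV 1))
     (EA2 epair (EA1 etl (EA1 efst (EV 1)))
                (EA3 step (EA1 ehd (EA1 efst (EV 1))) (EA1 esnd (EV 1)) (EV 4)))
     (EV 1)))).

Lemma den_foldl d step s a prm :
  den d (efoldl step) [:: lcode s; a; prm] =
  foldl (fun acc x => den d step [:: x; acc; prm]) a s.
Proof.
rewrite /efoldl -lock denA1.
set F := fun st => if cfst st is 0 then st else
  cpair (ltail (cfst st)) (den d step [:: lhead (cfst st); csnd st; prm]).
rewrite (@denRec_iter d _ _ _ _ F); last first.
  by move=> i h; dsimp; rewrite !den_fst !den_snd den_hd den_tl den_pair den_ite.
dsimp; rewrite den_pair.
suff H : forall n s a, size s <= n -> iter n F (cpair (lcode s) a) =
   cpair 0 (foldl (fun acc x => den d step [:: x; acc; prm]) a s).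
  by rewrite H ?size_lcode // den_snd cpair_snd.
move=> n {}s; elim: s n => [|x s IH] n a0 Hn.
  have HF : F (cpair 0 a0) = cpair 0 a0 by rewrite /F cpair_fst.
  by elim: n {Hn} => //= n ->.
case: n Hn => [//|n] Hn; rewrite iterSr.
have -> : F (cpair (lcode (x :: s)) a0) = cpair (lcode s) (den d step [:: x; a0; prm]).
  by rewrite /F cpair_fst /= /ltail /lhead /= cpair_fst cpair_snd cpair_snd.
by rewrite IH.
Qed.

Definition erevapp := locked (EA3 (efoldl (EA2 econs (EV 0) (EV 1))) (EV 0) (EV 1) EZ).
Lemma den_revapp d s t : den d erevapp [:: lcode s; lcode t] = lcode (catrev s t).
Proof.
rewrite /erevapp -lock; dsimp; rewrite den_foldl.
elim: s t => //= x s IH t; dsimp; by rewrite den_cons IH.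
Qed.

Definition erev := locked (EA2 erevapp (EV 0) EZ).
Lemma den_rev d s : den d erev [:: lcode s] = lcode (rev s).
Proof. by rewrite /erev -lock; dsimp; rewrite (den_revapp d s [::]). Qed.

Definition eapp := locked (EA2 erevapp (EA1 erev (EV 0)) (EV 1)).
Lemma den_app d s t : den d eapp [:: lcode s; lcode t] = lcode (s ++ t).
Proof. by rewrite /eapp -lock; dsimp; rewrite den_rev den_revapp catrevE revK. Qed.

Definition efilter p := locked (EA1 erev (EA3 (efoldl
   (EA3 eite (EA2 p (EV 0) (EV 2)) (EA2 econs (EV 0) (EV 1)) (EV 1))) (EV 0) EZ (EV 1))).
Lemma den_filter d p (P : pred nat) s prm :
  (forall x, x \in s -> den d p [:: x; prm] = P x) ->
  den d (efilter p) [:: lcode s; prm] = lcode (filter P s).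
Proof.
move=> HP; rewrite /efilter -lock; dsimp; rewrite den_foldl.
suff catrev_filter : forall t,
    foldl (fun acc x => den d (EA3 eite (EA2 p (EV 0) (EV 2)) (EA2 econs (EV 0) (EV 1)) (EV 1))
      [:: x; acc; prm]) (lcode t) s = lcode (catrev (filter P s) t).
  by rewrite (catrev_filter [::]) den_rev catrevE cats0 revK.
elim: s HP => //= x s IH HP t; dsimp.
rewrite HP ?mem_head //; case: (P x); rewrite ?den_iteS ?den_ite0 ?den_cons IH //;
  by move=> y Hy; apply: HP; rewrite in_cons Hy orbT.
Qed.

Definition emap f := locked (EA1 erev (EA3 (efoldl
   (EA2 econs (EA2 f (EV 0) (EV 2)) (EV 1))) (EV 0) EZ (EV 1))).
Lemma den_map d f (g : nat -> nat) s prm :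
  (forall x, x \in s -> den d f [:: x; prm] = g x) ->
  den d (emap f) [:: lcode s; prm] = lcode (map g s).
Proof.
move=> Hg; rewrite /emap -lock; dsimp; rewrite den_foldl.
suff catrev_map : forall t,
    foldl (fun acc x => den d (EA2 econs (EA2 f (EV 0) (EV 2)) (EV 1)) [:: x; acc; prm])
      (lcode t) s = lcode (catrev (map g s) t).
  by rewrite (catrev_map [::]) den_rev catrevE cats0 revK.
elim: s Hg => //= x s IH Hg t; dsimp.
rewrite Hg ?mem_head // den_cons IH //.
by move=> y Hy; apply: Hg; rewrite in_cons Hy orbT.
Qed.

(** * Strings as numbers *)

Lemma eq_foldl (A B : Type) (f g : B -> A -> B) :
  f =2 g -> forall z s, foldl f z s = foldl g z s.
Proof. by move=> fg z s; elim: s z => //= x s IH z; rewrite fg IH. Qed.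

Definition bit_step (acc : nat) (b : bool) := acc.*2 + b.
Definition bits_val (s : seq bool) := foldl bit_step 0 s.
Lemma foldl_bit_step m s : foldl bit_step m s = m * 2 ^ size s + bits_val s.
Proof.
rewrite /bits_val; elim: s m => [|a s IH] m; first by rewrite /= muln1 addn0.
have -> : foldl bit_step m (a :: s) = foldl bit_step (bit_step m a) s by [].
have -> : foldl bit_step 0 (a :: s) = foldl bit_step (bit_step 0 a) s by [].
rewrite IH [foldl bit_step (bit_step 0 a) s]IH /bit_step /= expnS; case: a => /=; lia.
Qed.
Lemma bits_val_lt s : bits_val s < 2 ^ size s.
Proof.
elim: s => //= a s IH; rewrite /bits_val /= foldl_bit_step -/(bits_val s) /bit_step expnS.
case: a => /=; lia.
Qed.
Lemma bits_val_cons a s : bits_val (a :: s) = a * 2 ^ size s + bits_val s.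
Proof. by rewrite /bits_val /= foldl_bit_step /bit_step; case: a. Qed.

Lemma nat_of_strE s : nat_of_str s = 2 ^ size s + bits_val s - 1.
Proof. by rewrite /nat_of_str -/(bit_step) -/(foldl bit_step 1 s) foldl_bit_step mul1n subn1. Qed.

Lemma nat_of_str_bounds s : 2 ^ size s <= (nat_of_str s).+1 < 2 ^ (size s).+1.
Proof.
rewrite nat_of_strE expnS; have := bits_val_lt s; have := expn_gt0 2 (size s); lia.
Qed.

Definition app_bit (N b : nat) := N.*2.+1 + b.
Lemma nat_of_str_rcons s b : nat_of_str (rcons s b) = app_bit (nat_of_str s) b.
Proof.
rewrite /app_bit !nat_of_strE size_rcons /bits_val -cats1 foldl_cat /= -/(bits_val s).
rewrite expnS /bit_step.
have := expn_gt0 2 (size s); lia.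
Qed.
Lemma nat_of_str_cat s t :
  nat_of_str (s ++ t) = foldl app_bit (nat_of_str s) (map nat_of_bool t).
Proof.
elim/last_ind: t => [|t b IH]; first by rewrite cats0.
by rewrite -rcons_cat nat_of_str_rcons IH map_rcons -cats1 foldl_cat.
Qed.
Lemma nat_of_str_nil : nat_of_str [::] = 0. Proof. by []. Qed.

Lemma shortlex_nat s t : shortlex s t = (nat_of_str s <= nat_of_str t).
Proof.
rewrite /shortlex.
have Hs := nat_of_str_bounds s; have Ht := nat_of_str_bounds t.
case: (ltngtP (size s) (size t)) => H /=.
- apply/esym/idP; have : 2 ^ (size s).+1 <= 2 ^ size t by rewrite leq_exp2l.
  lia.
- apply/esym/negbTE; rewrite -ltnNge.
  have : 2 ^ (size t).+1 <= 2 ^ size s by rewrite leq_exp2l.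
  lia.
- rewrite !nat_of_strE H leq_sub2rE ?leq_add2l; last first.
    by rewrite (leq_trans _ (leq_addr _ _)) // expn_gt0.
  elim: s t H {Hs Ht} => [|a s IH] [|b t] //= [H].
  rewrite !bits_val_cons IH // H.
  have := bits_val_lt s; have := bits_val_lt t; rewrite H.
  case: a; case: b => /=; lia.
Qed.

Fixpoint bits_rev (k M : nat) (acc : seq bool) :=
  if k is k'.+1 then (if M <= 1 then acc else bits_rev k' M./2 (odd M :: acc)) else acc.
Definition str_of_nat N := bits_rev N.+1 N.+1 [::].

Lemma half_app_bitS N (b : bool) : (app_bit N b).+1./2 = N.+1.
Proof. by rewrite /app_bit -addSn -doubleS addnC half_bit_double. Qed.

Lemma odd_app_bitS N (b : bool) : odd (app_bit N b).+1 = b.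
Proof. by rewrite /app_bit -addSn -doubleS oddD odd_double; case: b. Qed.

Lemma bits_rev_ok s acc k : size s <= k -> bits_rev k (nat_of_str s).+1 acc = s ++ acc.
Proof.
elim: k s acc => [|k IH] s acc; first by rewrite leqn0 => /nilP ->.
case/lastP: s => [//|s b]; rewrite size_rcons ltnS => Hs.
rewrite nat_of_str_rcons /= negbK addnC half_bit_double oddD odd_double addbF.
by rewrite IH ?cat_rcons //; case: b.
Qed.

Lemma size_le_nat s : size s <= nat_of_str s.
Proof.
have /andP [H _] := nat_of_str_bounds s.
by rewrite -ltnS (leq_trans _ H) // ltn_expl.
Qed.

Lemma nat_of_strK : cancel nat_of_str str_of_nat.
Proof. by move=> s; rewrite /str_of_nat bits_rev_ok ?cats0 // leqW ?size_le_nat. Qed.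
Lemma nat_of_str_inj : injective nat_of_str.
Proof. exact: can_inj nat_of_strK. Qed.

Lemma nat_of_str_surj N : exists s, nat_of_str s = N.
Proof.
elim: N {-2}N (leqnn N) => [|k IH] N HN.
  by exists [::]; move: HN; rewrite leqn0 => /eqP ->.
case: N HN => [|N] HN; first by exists [::].
have Hh : N./2 <= k by apply: (@leq_trans N) => //; rewrite leq_half_double; lia.
have [s Hs] := IH (N./2) Hh.
exists (rcons s (odd N)); rewrite nat_of_str_rcons Hs /app_bit.
have := odd_double_half N; case: (odd N); rewrite /=; lia.
Qed.

Lemma str_of_natK : cancel str_of_nat nat_of_str.
Proof. by move=> N; have [s <-] := nat_of_str_surj N; rewrite nat_of_strK. Qed.

Lemma shortlex_trans : transitive shortlex.
Proof. by move=> b a c; rewrite !shortlex_nat; apply: leq_trans. Qed.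
Lemma shortlex_anti : antisymmetric shortlex.
Proof.
move=> a b; rewrite !shortlex_nat => H; apply: nat_of_str_inj; apply/eqP.
by rewrite eqn_leq.
Qed.
Lemma shortlex_total : total shortlex.
Proof. by move=> a b; rewrite !shortlex_nat leq_total. Qed.

Lemma str_of_nat_inj : injective str_of_nat.
Proof. exact: can_inj str_of_natK. Qed.

Lemma size_str_of_nat n : size (str_of_nat n) <= clog n.
Proof.
have := nat_of_str_bounds (str_of_nat n); rewrite str_of_natK => /andP [H _].
have H2 := @trunc_log_ltn 2 n (ltnSn 1).
have H3 : 2 ^ size (str_of_nat n) < 2 ^ (trunc_log 2 n).+2.
  by apply: (leq_ltn_trans H); rewrite [2 ^ (_.+2)]expnS; lia.
by rewrite /clog -ltnS -(ltn_exp2l _ _ (ltnSn 1)).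
Qed.

Definition bits_step st := if cfst st <= 1 then st else
  cpair (cfst st)./2 (cpair (odd (cfst st)) (csnd st)).+1.

Lemma iter_bits_step k s acc : size s <= k ->
  iter k bits_step (cpair (nat_of_str s).+1 (lcode acc)) =
  cpair 1 (lcode (map nat_of_bool s ++ acc)).
Proof.
elim: k s acc => [|k IH] s acc; first by rewrite leqn0 => /nilP ->.
case/lastP: s => [|s b] Hs.
  have step1 : bits_step (cpair 1 (lcode acc)) = cpair 1 (lcode acc).
    by rewrite /bits_step cpair_fst.
  by elim: k.+1 {IH Hs} => //= k' ->.
rewrite iterSr nat_of_str_rcons.
have -> : bits_step (cpair (app_bit (nat_of_str s) b).+1 (lcode acc)) =
          cpair (nat_of_str s).+1 (lcode (nat_of_bool b :: acc)).
  by rewrite /bits_step cpair_fst cpair_snd half_app_bitS odd_app_bitS {1}/app_bit addSn.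
by rewrite IH ?map_rcons ?cat_rcons //; move: Hs; rewrite size_rcons.
Qed.

Definition ebits := locked (EA1 esnd (ERec (ES (EV 0)) (EA2 epair (ES (EV 0)) EZ)
  (EA3 eite (EA2 eleb (EA1 efst (EV 1)) (ecst 1)) (EV 1)
     (EA2 epair (EA1 ediv2 (EA1 efst (EV 1)))
                (EA2 econs (EA1 emod2 (EA1 efst (EV 1))) (EA1 esnd (EV 1))))))).

Lemma den_bits d s : den d ebits [:: nat_of_str s] = lcode (map nat_of_bool s).
Proof.
rewrite /ebits -lock denA1 (@denRec_iter d _ _ _ _ bits_step); last first.
  move=> i h; dsimp; rewrite den_fst den_leb /bits_step.
  case: (cfst h <= 1); rewrite ?den_iteS ?den_ite0 //.
  by rewrite den_snd den_mod2 den_consR den_div2 den_pair.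
dsimp; rewrite den_pair (@iter_bits_step _ _ [::]) ?size_le_nat //.
by rewrite /bits_step cpair_fst den_snd cpair_snd cats0.
Qed.

Definition eappbit := locked (ES (EA2 eadd (EA2 eadd (EV 0) (EV 0)) (EV 1))).
Lemma den_appbit d N b : den d eappbit [:: N; b] = app_bit N b.
Proof. by rewrite /eappbit -lock; dsimp; rewrite !den_add /app_bit addnn. Qed.

Definition eapp_enc := locked (EA2 eappbit (EA2 eappbit
   (EA3 (efoldl (EA2 eappbit (EA2 eappbit (EV 1) (EV 0)) (EV 0))) (EA1 ebits (EV 1)) (EV 0) EZ)
   EZ) (ecst 1)).
Lemma den_app_enc d t s :
  den d eapp_enc [:: nat_of_str t; nat_of_str s] = nat_of_str (t ++ enc_str s).
Proof.
rewrite /eapp_enc -lock; dsimp; rewrite den_bits den_foldl ?den_cst.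
rewrite /enc_str catA nat_of_str_cat /= !den_appbit.
congr (app_bit (app_bit _ 0) 1).
rewrite nat_of_str_cat.
rewrite (eq_foldl (g := fun a b => app_bit (app_bit a b) b)); last first.
  by move=> a b; dsimp; rewrite !den_appbit.
by elim: s (nat_of_str t) => //= b s IH a.
Qed.

Definition eenc_list := locked (EA3 (efoldl (EA2 eapp_enc (EV 1) (EV 0))) (EV 0) EZ EZ).
Lemma den_enc_list d l :
  den d eenc_list [:: lcode (map nat_of_str l)] = nat_of_str (enc_list l).
Proof.
rewrite /eenc_list -lock; dsimp; rewrite den_foldl.
rewrite -(cat0s (enc_list l)) -nat_of_str_nil.
rewrite (eq_foldl (g := fun a x => den d eapp_enc [:: a; x])); last first.
  by move=> a x; dsimp.
suff H : forall t,
    foldl (fun a x => den d eapp_enc [:: a; x]) (nat_of_str t) (map nat_of_str l) =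
    nat_of_str (t ++ enc_list l) by apply: H.
elim: l => [|s l IH] t /=; first by rewrite /enc_list /= cats0.
by rewrite den_app_enc IH /enc_list /= catA.
Qed.

Lemma den_enc_list_nat d L :
  den d eenc_list [:: lcode L] = nat_of_str (enc_list (map str_of_nat L)).
Proof. by rewrite -(den_enc_list d) -map_comp (eq_map str_of_natK) map_id. Qed.

(* In a [dec_state (ph, cur, acc)], [ph] is [0] before a pair of bits and
   [b.+1] after a first bit [b]; an unequal pair closes the current string. *)
Definition dec_state := (nat * seq bool * seq (seq bool))%type.
Definition dec_step (st : dec_state) (b : bool) : dec_state :=
  let: (ph, cur, acc) := st in
  if ph == 0 then ((nat_of_bool b).+1, cur, acc)
  else if ph.-1 == b then (0, rcons cur b, acc) else (0, [::], cur :: acc).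
Definition dec_str (w : seq bool) : seq (seq bool) :=
  rev (foldl dec_step (0, [::], [::]) w).2.

Lemma dec_enc l : dec_str (enc_list l) = l.
Proof.
have Hb : forall s cur acc,
    foldl dec_step (0, cur, acc) (flatten [seq [:: b; b] | b <- s]) = (0, cur ++ s, acc).
  elim=> [|b s IH] cur acc /=; first by rewrite cats0.
  by rewrite eqxx IH cat_rcons.
have Hs : forall s acc, foldl dec_step (0, [::], acc) (enc_str s) = (0, [::], s :: acc).
  by move=> s acc; rewrite /enc_str foldl_cat Hb.
have Hl : forall acc, foldl dec_step (0, [::], acc) (enc_list l) = (0, [::], catrev l acc).
  elim: l => //= s l IH acc.
  by rewrite /enc_list /= foldl_cat Hs -/(enc_list l) IH.
by rewrite /dec_str Hl /= catrevE cats0 revK.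
Qed.

Lemma code_set_inj : injective code_set.
Proof.
move=> A B H.
have := congr1 dec_str H; rewrite /code_set !dec_enc => HS.
by apply/fsetP => z; rewrite -(mem_sort shortlex) HS mem_sort.
Qed.

Definition dec_state_code (st : dec_state) : nat :=
  let: (ph, cur, acc) := st in cpair ph (cpair (nat_of_str cur) (lcode (map nat_of_str acc))).

Definition edec_step := locked (EA3 eite (EA1 efst (EV 1))
   (EA3 eite (EA2 eeqb (EA1 epred (EA1 efst (EV 1))) (EV 0))
        (EA2 epair EZ (EA2 epair (EA2 eappbit (EA1 efst (EA1 esnd (EV 1))) (EV 0))
                                 (EA1 esnd (EA1 esnd (EV 1)))))
        (EA2 epair EZ (EA2 epair EZ (EA2 econs (EA1 efst (EA1 esnd (EV 1)))
                                               (EA1 esnd (EA1 esnd (EV 1)))))))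
   (EA2 epair (ES (EV 0)) (EA1 esnd (EV 1)))).

Lemma den_dec_step d st (b : bool) prm :
  den d edec_step [:: nat_of_bool b; dec_state_code st; prm] =
  dec_state_code (dec_step st b).
Proof.
case: st => [[ph cur] acc]; rewrite /edec_step -lock; dsimp.
rewrite !den_fst !den_snd !cpair_fst !cpair_snd.
case: ph => [|ph]; first by rewrite den_ite0 den_pair.
rewrite den_iteS den_pred den_eqb /=; case: eqP => _.
  rewrite den_iteS !den_pair ?den_fst ?den_snd ?cpair_fst ?cpair_snd den_appbit.
  by rewrite -nat_of_str_rcons.
by rewrite den_ite0 !den_pair ?den_fst ?den_snd ?cpair_fst ?cpair_snd den_consR.
Qed.

Definition edec := locked (EA1 erev (EA1 esnd (EA1 esnd
  (EA3 (efoldl edec_step) (EA1 ebits (EV 0)) (EA2 epair EZ (EA2 epair EZ EZ)) EZ)))).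

Lemma den_dec d w : den d edec [:: nat_of_str w] = lcode (map nat_of_str (dec_str w)).
Proof.
rewrite /edec -lock; dsimp; rewrite den_bits !den_pair den_foldl.
have -> : cpair 0 (cpair 0 0) = dec_state_code (0, [::], [::]) by [].
have H st : foldl (fun acc x => den d edec_step [:: x; acc; 0]) (dec_state_code st)
    (map nat_of_bool w) = dec_state_code (foldl dec_step st w).
  by elim: w st => //= b w IH st; rewrite den_dec_step IH.
rewrite H /dec_str; case: (foldl _ _ _) => [[ph cur] acc] /=.
by rewrite !den_snd !cpair_snd den_rev map_rev.
Qed.

Definition ins (x : nat) (acc : seq nat) :=
  filter (fun y => y < x) acc ++ x :: filter (fun y => x < y) acc.
Definition usort (L : seq nat) := foldl (fun acc x => ins x acc) [::] L.

Lemma pairwise_ins x acc : pairwise ltn acc -> pairwise ltn (ins x acc).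
Proof.
move=> H.
have H1 : allrel ltn [seq y <- acc | y < x] (x :: [seq y <- acc | x < y]).
  apply/allrelP => y z; rewrite mem_filter => /andP [Hy _].
  rewrite in_cons mem_filter => /orP [/eqP -> //|/andP [Hz _]].
  exact: ltn_trans Hy Hz.
have H2 : all (ltn x) [seq y <- acc | x < y].
  by apply/allP => y; rewrite mem_filter => /andP [].
by rewrite /ins pairwise_cat H1 pairwise_cons H2 !pairwise_filter.
Qed.
Lemma mem_ins x acc y : (y \in ins x acc) = (y == x) || (y \in acc).
Proof.
rewrite /ins mem_cat in_cons !mem_filter.
case: (ltngtP y x) => [H|H|->]; rewrite ?eqxx ?orbT //=.
all: by rewrite ?orbF ?andbT ?andbF.
Qed.
Lemma pairwise_usort L : pairwise ltn (usort L).
Proof.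
rewrite /usort; have : pairwise ltn [::] by [].
elim: L [::] => //= x L IH acc Hacc; apply: IH; exact: pairwise_ins.
Qed.
Lemma mem_usort L y : (y \in usort L) = (y \in L).
Proof.
suff H : forall acc, (y \in foldl (fun acc x => ins x acc) acc L) = (y \in acc) || (y \in L).
  by rewrite /usort H.
elim: L => //= [|x L IH] acc; first by rewrite orbF.
rewrite IH mem_ins in_cons.
by case: (y == x); case: (y \in acc); case: (y \in L).
Qed.

Definition eltp := locked (EA2 eleb (ES (EV 0)) (EV 1)).
Definition egtp := locked (EA2 eleb (ES (EV 1)) (EV 0)).
Definition eins := locked (EA2 eapp (EA2 (efilter eltp) (EV 1) (EV 0))
                                (EA2 econs (EV 0) (EA2 (efilter egtp) (EV 1) (EV 0)))).
Lemma den_ins d x acc : den d eins [:: x; lcode acc] = lcode (ins x acc).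
Proof.
rewrite /eins -lock; dsimp.
rewrite (@den_filter _ _ (fun y => y < x)); last first.
  by move=> y _; rewrite /eltp -lock; dsimp; rewrite den_leb.
rewrite (@den_filter _ _ (fun y => x < y)); last first.
  by move=> y _; rewrite /egtp -lock; dsimp; rewrite den_leb.
by rewrite den_cons den_app.
Qed.

Definition eusort := locked (EA3 (efoldl (EA2 eins (EV 0) (EV 1))) (EV 0) EZ EZ).
Lemma den_usort d L : den d eusort [:: lcode L] = lcode (usort L).
Proof.
rewrite /eusort -lock; dsimp; rewrite den_foldl /usort.
suff H : forall acc, foldl (fun a x => den d (EA2 eins (EV 0) (EV 1)) [:: x; a; 0]) (lcode acc) L
   = lcode (foldl (fun acc x => ins x acc) acc L) by apply: (H [::]).
elim: L => //= x L IH acc.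
by rewrite -IH; dsimp; rewrite den_ins.
Qed.

Lemma usort_shortlex (L : seq nat) (S : seq (seq bool)) :
  uniq S -> (forall s, (s \in S) = (nat_of_str s \in L)) ->
  map str_of_nat (usort L) = sort shortlex S.
Proof.
move=> US HS.
have Hpw := pairwise_usort L.
apply: (sorted_eq shortlex_trans shortlex_anti); last first.
- apply: uniq_perm.
  + rewrite map_inj_uniq; last exact: str_of_nat_inj.
    by apply: (sorted_uniq ltn_trans ltnn); apply: pairwise_sorted.
  + by rewrite sort_uniq.
  + move=> s; rewrite mem_sort HS -mem_usort.
    by rewrite -{1}(nat_of_strK s) mem_map //; exact: str_of_nat_inj.
- exact: (sort_sorted shortlex_total S).
- apply: pairwise_sorted; rewrite (pairwise_map str_of_nat shortlex).
  apply: sub_pairwise Hpw => a b Hab.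
  by rewrite /= shortlex_nat !str_of_natK ltnW.
Qed.

(** * Fibres of the oracle *)

Definition efibre := locked (EA1 eenc_list (EA1 eusort
  (EA2 (efilter (EA2 eeqb (EOr (EV 0)) (EV 1))) (EA1 edec (EV 0)) (EV 0)))).

Definition fibre_code (d : nat -> nat) (w : seq bool) : seq bool :=
  enc_list (map str_of_nat
    (usort (filter (fun z => d z == nat_of_str w) (map nat_of_str (dec_str w))))).

Lemma den_fibre d w : den d efibre [:: nat_of_str w] = nat_of_str (fibre_code d w).
Proof.
rewrite /efibre -lock; dsimp; rewrite den_dec.
rewrite (@den_filter _ _ (fun z => d z == nat_of_str w)); last first.
  by move=> z _; dsimp; rewrite den_eqb.
by rewrite den_usort den_enc_list_nat.
Qed.

Definition efibre_oracle := locked (EA1 efibre (EOr (EV 0))).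
Lemma den_fibre_oracle d x :
  den d efibre_oracle [:: x] = nat_of_str (fibre_code d (str_of_nat (d x))).
Proof. by rewrite /efibre_oracle -lock; dsimp; rewrite -den_fibre str_of_natK. Qed.

Definition eoracle_first := EOr (EA1 ehd (EA1 edec (EV 0))).
Lemma den_oracle_first d w :
  den d eoracle_first [:: nat_of_str w] = d (lhead (lcode (map nat_of_str (dec_str w)))).
Proof. by rewrite /eoracle_first; dsimp; rewrite den_dec den_hd. Qed.

Definition epow2 := locked (ERec (EV 0) (ES EZ) (EA2 eadd (EV 1) (EV 1))).
Lemma den_pow2 d n : den d epow2 [:: n] = 2 ^ n.
Proof.
rewrite /epow2 -lock (@denRec_iter d _ _ _ _ (fun h => h + h)); last first.
  by move=> i h; dsimp; rewrite den_add.
by dsimp; elim: n => //= n ->; rewrite expnS; lia.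
Qed.

Definition erng := locked (ERec (EA1 epow2 (EV 0)) EZ
   (EA2 econs (EA2 eadd (EA1 epred (EA1 epow2 (EV 2))) (EV 0)) (EV 1))).
Lemma den_rng d n : den d erng [:: n] = lcode (rev (iota (2 ^ n).-1 (2 ^ n))).
Proof.
rewrite /erng -lock (@denRec d _ _ _ _ (fun i h => (cpair ((2 ^ n).-1 + i) h).+1)); last first.
  by move=> i h; dsimp; rewrite den_pow2 den_pred den_add den_consR.
dsimp; rewrite den_pow2.
move: (2 ^ n).-1 => b; elim: (2 ^ n) => // k IH.
by rewrite [nat_rec _ _ _ _]/= IH -(addn1 k) iotaD rev_cat.
Qed.

Definition efamily :=
  EA1 eenc_list (EA1 eusort (EA2 (emap (EA1 efibre_oracle (EV 0))) (EA1 erng (EV 0)) EZ)).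

Definition family_code (d : nat -> nat) (n : nat) : seq bool :=
  enc_list (map str_of_nat (usort (map (fun z => nat_of_str (fibre_code d (str_of_nat (d z))))
                                       (rev (iota (2 ^ n).-1 (2 ^ n)))))).
Lemma den_family d n : den d efamily [:: n] = nat_of_str (family_code d n).
Proof.
rewrite /efamily; dsimp; rewrite den_rng.
rewrite (@den_map _ _ (fun z => nat_of_str (fibre_code d (str_of_nat (d z))))); last first.
  by move=> z _; dsimp; rewrite den_fibre_oracle.
by rewrite den_usort den_enc_list_nat.
Qed.

Lemma size_enc_str s : size (enc_str s) = (size s).*2 + 2.
Proof.
rewrite /enc_str size_cat /=.
suff -> : size (flatten [seq [:: b; b] | b <- s]) = (size s).*2 by [].
by elim: s => //= b s ->; rewrite doubleS.
Qed.

(* As in [dec_step], except that mode [3] means that the (first) unequal pair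
   has been read: the remaining bits are copied verbatim. *)
Definition parse_state := (nat * seq bool * seq bool)%type.
Definition parse_step (st : parse_state) (b : bool) : parse_state :=
  let: (m, s1, s2) := st in
  if m == 3 then (3, s1, rcons s2 b)
  else if m == 0 then ((nat_of_bool b).+1, s1, s2)
  else if m.-1 == b then (0, rcons s1 b, s2) else (3, s1, s2).

Lemma foldl_parse_step_enc s p :
  foldl parse_step (0, [::], [::]) (enc_str s ++ p) = (3, s, p).
Proof.
have Hb : forall s s1,
    foldl parse_step (0, s1, [::]) (flatten [seq [:: b; b] | b <- s]) = (0, s1 ++ s, [::]).
  elim=> [|b s' IH] s1 /=; first by rewrite cats0.
  by case: b => /=; rewrite IH cat_rcons.
have Hp : forall p s2, foldl parse_step (3, s, s2) p = (3, s, s2 ++ p).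
  elim=> [|b p' IH] s2 /=; first by rewrite cats0.
  by rewrite IH cat_rcons.
by rewrite /enc_str -catA foldl_cat Hb /= Hp.
Qed.

Definition parse_state_code (st : parse_state) : nat :=
  let: (m, s1, s2) := st in cpair m (cpair (nat_of_str s1) (nat_of_str s2)).

Definition eparse_step := locked (EA3 eite (EA2 eeqb (EA1 efst (EV 1)) (ecst 3))
   (EA2 epair (ecst 3) (EA2 epair (EA1 efst (EA1 esnd (EV 1)))
                                  (EA2 eappbit (EA1 esnd (EA1 esnd (EV 1))) (EV 0))))
   (EA3 eite (EA1 efst (EV 1))
      (EA3 eite (EA2 eeqb (EA1 epred (EA1 efst (EV 1))) (EV 0))
          (EA2 epair EZ (EA2 epair (EA2 eappbit (EA1 efst (EA1 esnd (EV 1))) (EV 0))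
                                   (EA1 esnd (EA1 esnd (EV 1)))))
          (EA2 epair (ecst 3) (EA1 esnd (EV 1))))
      (EA2 epair (ES (EV 0)) (EA1 esnd (EV 1))))).

Lemma den_parse_step d st (b : bool) prm :
  den d eparse_step [:: nat_of_bool b; parse_state_code st; prm] =
  parse_state_code (parse_step st b).
Proof.
case: st => [[m s1] s2]; rewrite /eparse_step -lock; dsimp.
rewrite !den_fst !den_snd ?den_cst !(den_eqb, den_pred, den_pair, den_appbit, cpair_fst, cpair_snd).
case: (m =P 3) => [->|Hm]; first by rewrite !den_ite /= nat_of_str_rcons.
case: m Hm => [|m] Hm; rewrite !den_ite //=.
by case: eqP => //= _; rewrite nat_of_str_rcons.
Qed.

Definition eparse :=
  locked (EA3 (efoldl eparse_step) (EA1 ebits (EV 0)) (EA2 epair EZ (EA2 epair EZ EZ)) EZ).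

Lemma den_parse d s p :
  den d eparse [:: nat_of_str (enc_str s ++ p)] = parse_state_code (3, s, p).
Proof.
rewrite /eparse -lock; dsimp; rewrite den_bits !den_pair den_foldl.
have -> : cpair 0 (cpair 0 0) = parse_state_code (0, [::], [::]) by [].
have H : forall st w,
    foldl (fun acc x => den d eparse_step [:: x; acc; 0]) (parse_state_code st)
      (map nat_of_bool w) = parse_state_code (foldl parse_step st w).
  by move=> st w; elim: w st => //= b w IH st; rewrite den_parse_step IH.
by rewrite H foldl_parse_step_enc.
Qed.

Definition eprefix := EA1 efst (EA1 esnd (EA1 eparse (EV 0))).
Definition esuffix := EA1 esnd (EA1 esnd (EA1 eparse (EV 0))).
Lemma den_prefix d s p : den d eprefix [:: nat_of_str (enc_str s ++ p)] = nat_of_str s.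
Proof. by rewrite /eprefix; dsimp; rewrite den_parse den_snd cpair_snd den_fst cpair_fst. Qed.
Lemma den_suffix d s p : den d esuffix [:: nat_of_str (enc_str s ++ p)] = nat_of_str p.
Proof. by rewrite /esuffix; dsimp; rewrite den_parse !den_snd !cpair_snd. Qed.

(* A code defines a partial function only classically: whether it halts is not
   decidable. *)
Definition fun_of_code (c : rcode) (p x : seq bool) : option (seq bool) :=
  match excluded_middle_informative
          (exists y, converges c [:: nat_of_str p; nat_of_str x] (nat_of_str y)) with
  | left H => Some (proj1_sig (constructive_indefinite_description _ H))
  | right _ => None
  end.

Lemma fun_of_code_computes c : computes c (fun_of_code c).
Proof.
move=> p x y; rewrite /fun_of_code; case: excluded_middle_informative => [H|H].
  case: (constructive_indefinite_description _ H) => y0 /= [k0 Hk0].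
  split=> [[<-]|[k Hk]]; first by exists k0.
  by congr Some; apply: nat_of_str_inj; apply: reval_det Hk0 Hk.
by split=> // -[k Hk]; case: H; exists y, k.
Qed.

Lemma fun_of_code_val c p x y :
  converges c [:: nat_of_str p; nat_of_str x] (nat_of_str y) -> fun_of_code c p x = Some y.
Proof. by move=> [k Hk]; apply/fun_of_code_computes; exists k. Qed.

(* Compiled against the everywhere-defined oracle [RZero], an expression runs
   on any input, in particular on programs that need not be total. *)
Lemma converges_oracle_free e N v :
  converges (RComp (compile RZero 1 e) [:: RZero; RProj 0]) (N :: v) (den (fun=> 0) e [:: N]).
Proof.
apply: (converges_comp (w := [:: 0; N])).
  apply: converges_all_cons (converges_zero _) (converges_all_cons (converges_proj 0 _) _).
  exact: converges_all_nil.
by apply: compile_converges => // z; apply: converges_zero.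
Qed.

Lemma CT_le_mono D y x m m' : m <= m' -> CT_le D y x m -> CT_le D y x m'.
Proof. by move=> mm' [p [pm Hp]]; exists p; split=> //; apply: leq_trans mm'. Qed.

Lemma CT_le_lt D y x m m' : m < m' -> CT_le D y x m -> CT_lt D y x m'.
Proof. by move=> mm' [p [pm Hp]]; exists p; split=> //; apply: leq_ltn_trans mm'. Qed.

Lemma C_le_mono D y m m' : m <= m' -> C_le D y m -> C_le D y m'.
Proof. by move=> mm' [p [pm Hp]]; exists p; split=> //; apply: leq_trans mm'. Qed.

Section Decompressor.
Variables (D : seq bool -> seq bool -> option (seq bool)) (cD : rcode).
Hypothesis cD_computes : computes cD D.
Hypothesis D_optimal : forall F, computable F ->
  exists k, forall p, exists p', size p' <= size p + k /\ forall z, D p' z = F p z.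

Definition run p z := odflt [::] (D p z).

Definition oracle p N := nat_of_str (run p (str_of_nat N)).

Lemma run_total p z : total_prog D p -> D p z = Some (run p z).
Proof. by move=> Hp; rewrite /run; case E: (D p z) => //; case: (Hp z E). Qed.

Lemma oracle_okP p : total_prog D p -> oracle_ok cD (nat_of_str p) (oracle p).
Proof.
move=> Hp N; have /cD_computes [k Hk] := run_total (str_of_nat N) Hp.
by exists k; rewrite str_of_natK in Hk.
Qed.

Lemma CT_relativize e (f : seq bool -> seq bool -> seq bool) :
  (forall p z, total_prog D p -> den (oracle p) e [:: nat_of_str z] = nat_of_str (f p z)) ->
  exists k, forall p z, total_prog D p -> CT_le D (f p z) z (size p + k).
Proof.
move=> ef; pose c := compile cD 1 e.
have [k Hk] := D_optimal (ex_intro _ c (fun_of_code_computes c)).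
exists k => p z Hp; have [p' [Hp' HD]] := Hk p.
have Dp' z' : D p' z' = Some (f p z').
  rewrite HD; apply: fun_of_code_val; rewrite -ef //.
  by apply: compile_converges => //; exact: oracle_okP.
by exists p'; split=> //; split=> [z'|]; rewrite Dp'.
Qed.

Definition fibre p w : {fset seq bool} :=
  seq_fset tt [seq z <- dec_str w | D p z == Some w].

Lemma mem_fibre p w z : (z \in fibre p w) = (z \in dec_str w) && (D p z == Some w).
Proof. by rewrite seq_fsetE mem_filter andbC. Qed.

Lemma fibre_codeE p w : total_prog D p -> fibre_code (oracle p) w = code_set (fibre p w).
Proof.
move=> Hp; rewrite /fibre_code /code_set; congr enc_list; apply: usort_shortlex.
  exact: fset_uniq.
move=> s; rewrite mem_fibre mem_filter (mem_map nat_of_str_inj) /oracle nat_of_strK.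
by rewrite (inj_eq nat_of_str_inj) (run_total _ Hp) (inj_eq (@Some_inj _)) andbC.
Qed.

Lemma CT_fibre : exists k, forall p w, total_prog D p ->
  CT_le D (code_set (fibre p w)) w (size p + k).
Proof.
apply: (@CT_relativize efibre (fun p w => code_set (fibre p w))) => p w Hp.
by rewrite den_fibre fibre_codeE.
Qed.

Lemma CT_fibre_run : exists k, forall p x, total_prog D p ->
  CT_le D (code_set (fibre p (run p x))) x (size p + k).
Proof.
apply: (@CT_relativize efibre_oracle (fun p x => code_set (fibre p (run p x)))) => p x Hp.
by rewrite den_fibre_oracle /oracle !nat_of_strK fibre_codeE.
Qed.

Lemma CT_fibre_inv : exists k, forall p w y, total_prog D p -> y \in fibre p w ->
  CT_le D w (code_set (fibre p w)) (size p + k).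
Proof.
have [k Hk] : exists k, forall p z, total_prog D p ->
    CT_le D (run p (head [::] (dec_str z))) z (size p + k).
  apply: (@CT_relativize eoracle_first) => p z Hp; rewrite den_oracle_first.
  by case: (dec_str z) => [|y ys] //=; rewrite lhead_cons /oracle nat_of_strK.
exists k => p w y Hp yw; have := Hk p (code_set (fibre p w)) Hp.
rewrite /code_set dec_enc; case E: (sort shortlex _) => [|y' ys].
  by move: yw; rewrite -(mem_sort shortlex) E.
have : y' \in fibre p w by rewrite -(mem_sort shortlex) E mem_head.
by rewrite mem_fibre /run => /andP [_ /eqP ->].
Qed.

Definition fibre_family p n : {fset {fset seq bool}} :=
  seq_fset tt [seq fibre p (run p (str_of_nat N)) | N <- rev (iota (2 ^ n).-1 (2 ^ n))].

Lemma fibre_family_partition p n : is_partition (fibre_family p n).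
Proof.
move=> K1 K2; rewrite !seq_fsetE => /mapP [N1 _ ->] /mapP [N2 _ ->].
case/fset0Pn => y; rewrite in_fsetI !mem_fibre => /andP [/andP [_ /eqP H1] /andP [_ /eqP H2]].
by move: H1; rewrite H2 => -[->].
Qed.

Lemma mem_fibre_family p x : fibre p (run p x) \in fibre_family p (size x).
Proof.
rewrite seq_fsetE; apply/mapP; exists (nat_of_str x); last by rewrite nat_of_strK.
rewrite mem_rev mem_iota; have := nat_of_str_bounds x; rewrite expnS.
have := expn_gt0 2 (size x); lia.
Qed.

Lemma family_codeE p n : total_prog D p -> family_code (oracle p) n = code_fam (fibre_family p n).
Proof.
move=> Hp; rewrite /family_code /code_fam; congr enc_list; apply: usort_shortlex.
  by rewrite map_inj_uniq ?fset_uniq //; exact: code_set_inj.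
move=> s; rewrite (eq_mem_map code_set (seq_fsetE tt _)).
rewrite -map_comp -(mem_map nat_of_str_inj) -map_comp.
congr (_ \in _); apply: eq_map => N /=.
by rewrite /oracle nat_of_strK fibre_codeE.
Qed.

(* The program for the family is [enc_str n ++ p]: it is parsed into [n] and
   [p], and [p] then serves as the oracle. *)
Lemma C_fibre_family : exists k, forall p n, total_prog D p ->
  C_le D (code_fam (fibre_family p n)) (size p + (clog n).*2 + k).
Proof.
pose cF := RComp (compile cD 1 efamily)
  [:: RComp (compile RZero 1 esuffix) [:: RZero; RProj 0];
      RComp (compile RZero 1 eprefix) [:: RZero; RProj 0]].
have [k Hk] := D_optimal (ex_intro _ cF (fun_of_code_computes cF)).
exists (k + 2) => p n Hp; pose q := enc_str (str_of_nat n) ++ p.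
have [q' [Hq' HD]] := Hk q; exists q'; split.
  by move: Hq'; rewrite size_cat size_enc_str; have := size_str_of_nat n; lia.
rewrite HD; apply: fun_of_code_val.
apply: (converges_comp (w := [:: nat_of_str p; n])).
  apply: converges_all_cons.
    by rewrite -(den_suffix (fun=> 0) (str_of_nat n) p); apply: converges_oracle_free.
  apply: converges_all_cons (converges_all_nil _).
  rewrite -{1}[n]str_of_natK -(den_prefix (fun=> 0) (str_of_nat n) p).
  exact: converges_oracle_free.
rewrite -family_codeE // -den_family.
by apply: compile_converges => //; exact: oracle_okP.
Qed.

End Decompressor.

Local Open Scope fset_scope.

Theorem lemma4 :
  forall D : seq bool -> seq bool -> option (seq bool),
  universal D ->
  exists c : nat,
  forall (n : nat) (x : seq bool) (A : {fset seq bool}) (eps : nat),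
    size x = n ->
    x \in A ->
    CT_le D (code_set A) x eps ->
    exists (A1 : {fset seq bool}) (F : {fset {fset seq bool}}),
      is_partition F /\
      C_le D (code_fam F) (eps + c * clog n) /\
      (x \in A1 /\ CT_le D (code_set A1) x (eps + c * clog n)) /\
      (CT_lt D (code_set A) (code_set A1) (eps + c * clog n) /\
       CT_lt D (code_set A1) (code_set A) (eps + c * clog n)) /\
      #|` A1| <= #|` A| /\
      A1 \in F.
Proof.
move=> D [[cD HcD] Dopt].
have [k1 Hfib] := CT_fibre HcD Dopt.
have [k2 Hrun] := CT_fibre_run HcD Dopt.
have [k3 Hinv] := CT_fibre_inv HcD Dopt.
have [k4 Hfam] := C_fibre_family HcD Dopt.
exists (k1 + k2 + k3 + k4 + 3)%N => n x A eps <- xA [p [peps [Hp pxA]]].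
have runx : run D p x = code_set A by rewrite /run pxA.
have xA1 : x \in fibre D p (code_set A).
  by rewrite mem_fibre /code_set dec_enc mem_sort xA pxA eqxx.
have A1A : fibre D p (code_set A) `<=` A.
  by apply/fsubsetP => y; rewrite mem_fibre /code_set dec_enc mem_sort => /andP [].
have clog_pos : 0 < clog (size x) by [].
exists (fibre D p (code_set A)), (fibre_family D p (size x)).
split; first exact: fibre_family_partition.
split; first by apply: C_le_mono (Hfam p _ Hp); nia.
split; first by split=> //; rewrite -runx; apply: CT_le_mono (Hrun p x Hp); nia.
split; first by split; [apply: CT_le_lt (Hinv p _ x Hp xA1) | apply: CT_le_lt (Hfib p _ Hp)]; nia.
by split; [exact: fsubset_leq_card | rewrite -runx; exact: mem_fibre_family].
Qed.
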